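(* Let $(J,S)$ be an irreducible and ergodic homogeneous $d$-dimensional multi-time Markov renewal chain, and let $\nu=(\nu_1,\dots,\nu_s)$ be the stationary distribution of the embedded chain $J$. Then for all $j\in E$ and $1\le u,v\le d$: $$\mu^{(u)}_{jj}=\frac{\sum_{i=1}^s\nu_i m^{[u]}_i}{\nu_j},\qquad \mu_{jj}=\frac{\sum_{i=1}^s\nu_i m_i}{\nu_j},$$ $$\mu^{(u,v)}_{jj}=\frac{\sum_{i=1}^s\nu_i m^{[u,v]}_i}{\nu_j}+\frac{\sum_{i=1}^s\sum_{r\ne j}\nu_i p_{ir}\big[m^{[u]}_{ir}\mu^{(v)}_{rj}+m^{[v]}_{ir}\mu^{(u)}_{rj}\big]}{\nu_j}.$$
   Context: $E=\{1,\dots,s\}$; $\mathbb{N}^d$ has the componentwise partial order, $k<l$ meaning $k\le l$, $k\ne l$. A homogeneous $d$-dimensional multi-time Markov renewal chain is a process $(J_n,S_n)_{n\in\mathbb{N}}$, $J_n\in E$, $S_n=(S^{[1]}_n,\dots,S^{[d]}_n)\in\mathbb{N}^d$, $S_0=0_d$, $S_n<S_{n+1}$, with a.s. $\mathbb{P}(J_{n+1}=j,S_{n+1}-S_n=k\mid J_{0:n},S_{0:n})=q_{J_nj}(k)$, $q_{ij}(k)=\mathbb{P}(J_{n+1}=j,S_{n+1}-S_n=k\mid J_n=i)$ independent of $n$. $X_{n+1}=S_{n+1}-S_n$ with coordinates $X^{[u]}_{n+1}$. $p_{ij}=\sum_kq_{ij}(k)$ are the transition probabilities of $J$. $\mathbb{E}_i$: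 expectation given $J_0=i$. Moments: $m^{[u]}_i=\mathbb{E}[X^{[u]}_{n+1}\mid J_n=i]$, $m_i=(m^{[1]}_i,\dots,m^{[d]}_i)$, $m^{[u,v]}_i=\mathbb{E}[X^{[u]}_{n+1}X^{[v]}_{n+1}\mid J_n=i]$, $m^{[u]}_{ir}=\mathbb{E}[X^{[u]}_{n+1}\mid J_n=i,J_{n+1}=r]$. With $m_j=\min\{l\ge1:J_l=j\}$ and $T_j=S_{m_j}$ (coordinates $T^{[u]}_j$): $\mu^{(u)}_{ij}=\mathbb{E}_i[T^{[u]}_j]$, $\mu_{ij}=(\mu^{(1)}_{ij},\dots,\mu^{(d)}_{ij})$, $\mu^{(u,v)}_{ij}=\mathbb{E}_i[T^{[u]}_jT^{[v]}_j]$. For each $u$, $(J,S^{[u]})$ is the marginal one-dimensional-time Markov renewal chain with kernel $q^{[u]}_{ij}(k)=\sum_{k_{1:d}:k_u=k}q_{ij}(k_{1:d})$. The chain $(J,S)$ is irreducible if $J$ is irreducible; it is ergodic if every marginal chain $(J,S^{[u]})$ is positive recurrent (each state $j$ has a.s. finite return time $T^{[u]}_j$ with finite mean) and aperiodic (the distribution of each return time $T^{[u]}_j$ has period $1$). *)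

From HB Require Import structures.
From mathcomp Require Import all_boot all_order all_algebra.
From mathcomp Require Import all_classical all_reals all_analysis.
Set Implicit Arguments. Unset Strict Implicit. Unset Printing Implicit Defensive.
Import Order.TTheory GRing.Theory Num.Theory.
Local Open Scope classical_set_scope.
Local Open Scope ring_scope.
Local Open Scope ereal_scope.

(* State space E = 'I_s, time space N^d = {ffun 'I_d -> nat}.
   A d-dimensional multi-time Markov renewal chain (J,S) is determined in law by
   its initial state and its semi-Markov kernel
     q i j k = P(J_{n+1} = j, S_{n+1} - S_n = k | J_n = i).                    *)
Section MTMRC.
Variables (R : realType) (s d : nat).
Variable q : 'I_s -> 'I_s -> {ffun 'I_d -> nat} -> R.

Definition zero_time : {ffun 'I_d -> nat} := [ffun => 0%N].

(* q is a semi-Markov kernel of a chain with S_n < S_{n+1} (componentwise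
   order, strict), i.e. increments are nonzero elements of N^d. *)
Definition is_mt_kernel : Prop :=
  (forall i j k, (0 <= q i j k)%R) /\
  (forall i j, q i j zero_time = 0%R) /\
  (forall i, \sum_(j < s) \esum_(k in [set: {ffun 'I_d -> nat}]) (q i j k)%:E = 1).

Definition pE (i j : 'I_s) : \bar R := \esum_(k in [set: {ffun 'I_d -> nat}]) (q i j k)%:E.
Definition p (i j : 'I_s) : R := fine (pE i j).

Definition irreducible : Prop :=
  forall i j : 'I_s, connect (fun a b => (0 < p a b)%R) i j.

Definition stationary (nu : 'I_s -> R) : Prop :=
  (forall i, (0 <= nu i)%R) /\ (\sum_(i < s) nu i = 1)%R /\
  (forall j, \sum_(i < s) nu i * p i j = nu j)%R.

(* A trajectory (J_1,X_1),...,(J_n,X_n) of the chain after time 0. *)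
Definition traj := seq ('I_s * {ffun 'I_d -> nat}).

Fixpoint traj_prob (i : 'I_s) (t : traj) : R :=
  match t with
  | [::] => 1%R
  | (j, k) :: t' => (q i j k * traj_prob j t')%R
  end.

(* the trajectory is exactly the part up to the first passage time m_j:
   n >= 1, J_n = j and J_l <> j for 1 <= l < n *)
Fixpoint first_passage (j : 'I_s) (t : traj) : bool :=
  match t with
  | [::] => false
  | (x, _) :: t' => if t' is [::] then x == j else (x != j) && first_passage j t'
  end.

Definition FP (j : 'I_s) : set traj := [set t | first_passage j t].

Definition coordS (u : 'I_d) (t : traj) : nat := \sum_(e <- t) e.2 u.

(* P_i(m_j < oo) *)
Definition prob_hit (i j : 'I_s) : \bar R :=
  \esum_(t in FP j) (traj_prob i t)%:E.

(* P_i(m_j < oo, T^[u]_j = n) *)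
Definition prob_T (u : 'I_d) (i j : 'I_s) (n : nat) : \bar R :=
  \esum_(t in [set t | FP j t /\ coordS u t = n]) (traj_prob i t)%:E.

(* mu^(u)_ij = E_i[T^[u]_j] (the chain hits j a.s. in all uses below) *)
Definition mu1 (u : 'I_d) (i j : 'I_s) : \bar R :=
  \esum_(t in FP j) (traj_prob i t)%:E * ((coordS u t)%:R)%:E.

Definition mu (i j : 'I_s) : 'I_d -> \bar R := fun u => mu1 u i j.

Definition mu2 (u v : 'I_d) (i j : 'I_s) : \bar R :=
  \esum_(t in FP j) (traj_prob i t)%:E * ((coordS u t * coordS v t)%:R)%:E.

Definition m1 (u : 'I_d) (i : 'I_s) : \bar R :=
  \sum_(j < s) \esum_(k in [set: {ffun 'I_d -> nat}]) (q i j k * (k u)%:R)%:E.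
Definition mvec (i : 'I_s) : 'I_d -> \bar R := fun u => m1 u i.
Definition m2 (u v : 'I_d) (i : 'I_s) : \bar R :=
  \sum_(j < s) \esum_(k in [set: {ffun 'I_d -> nat}]) (q i j k * (k u * k v)%:R)%:E.
(* m^[u]_ir = E[X^[u]_{n+1} | J_n = i, J_{n+1} = r]  (set to 0 if p_ir = 0,
   where the conditional expectation is undefined; it only appears multiplied
   by p_ir) *)
Definition m1c (u : 'I_d) (i r : 'I_s) : \bar R :=
  if p i r == 0%R then 0
  else (\esum_(k in [set: {ffun 'I_d -> nat}]) (q i r k * (k u)%:R)%:E) * ((p i r)^-1)%:E.

(* marginal chain (J, S^[u]): state j positive recurrent and aperiodic *)
Definition pos_recurrent (u : 'I_d) (j : 'I_s) : Prop :=
  prob_hit j j = 1 /\ mu1 u j j < +oo.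

Definition aperiodic_state (u : 'I_d) (j : 'I_s) : Prop :=
  forall r : nat, (forall n, 0 < prob_T u j j n -> (r %| n)%N) -> r = 1%N.

Definition ergodic : Prop :=
  forall (u : 'I_d) (j : 'I_s), pos_recurrent u j /\ aperiodic_state u j.

End MTMRC.

From HB Require Import structures.
From mathcomp Require Import all_boot all_order all_algebra.
From mathcomp Require Import all_classical all_reals all_analysis.
From mathcomp Require Import ring lra.
Import Order.TTheory GRing.Theory Num.Theory.
Local Open Scope classical_set_scope.
Local Open Scope ring_scope.
Local Open Scope ereal_scope.
Set Implicit Arguments. Unset Strict Implicit. Unset Printing Implicit Defensive.

(* Conditioning on the first jump, a moment x_i = E_i[f(T_j)] solves the
   taboo system x_i = c_i + sum_(r != j) p_ir x_r, whose source c_i comes from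
   the first increment (m^[u] for the mean; m^[u,v] plus the cross terms
   p_ir m^[u]_ir mu^(v)_rj for the second moment).  Weighting by nu and
   summing, stationarity turns sum_i nu_i p_ir x_r into nu_r x_r, so all but
   nu_j x_j cancels: nu_j x_j = sum_i nu_i c_i.  The cancellation needs finite
   x_r.  By irreducibility an infinite x_r forces x_j = +oo, which ergodicity
   excludes for first moments; for second moments either some c_i is +oo and
   both sides are +oo, or x is dominated by a finite supersolution. *)

Section ExtendedSums.
Variable R : realType.
Implicit Types (T : choiceType).

Lemma esum_finType (I : finType) (a : I -> \bar R) : (forall i, 0 <= a i) ->
  \esum_(i in [set: I]) a i = \sum_(i : I) a i.
Proof.
move=> a0; rewrite esum_fset; [|exact: finite_finset|by move=> *].
rewrite -big_enum /= [RHS]fsbig_seq ?enum_uniq //.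
by congr (\big[_/_]_(_ \in _) _); apply/seteqP; split => x //= _; rewrite mem_enum.
Qed.

Lemma le_term_esum T (I : set T) (a : T -> \bar R) t :
  I t -> a t <= \esum_(i in I) a i.
Proof.
move=> It; apply: esum_ge; exists [set t]; last by rewrite fsbig_set1.
by split; [exact: finite_set1|move=> x ->].
Qed.

Lemma le_esum_subset T (A B : set T) (a : T -> \bar R) :
  A `<=` B -> \esum_(t in A) a t <= \esum_(t in B) a t.
Proof.
move=> AB; apply: ge_ereal_sup => _ [X [finX XA] <-]; apply: esum_ge.
by exists X => //; split => //; exact: subset_trans XA AB.
Qed.

Lemma esum_le_exhaustion T (A : nat -> set T) (B : set T) (a : T -> \bar R) z :
  (forall X, finite_set X -> X `<=` B -> exists n, X `<=` A n) ->
  (forall n, \esum_(t in A n) a t <= z) -> \esum_(t in B) a t <= z.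
Proof.
move=> exhaust Az; apply: ge_ereal_sup => _ [X [finX XB] <-].
have [n XA] := exhaust X finX XB; apply: le_trans (Az n); apply: esum_ge.
by exists X.
Qed.

Lemma ge0_esumZl T (I : set T) (c : R) (a : T -> \bar R) :
  (0 <= c)%R -> (forall t, 0 <= a t) ->
  \esum_(t in I) (c%:E * a t) = c%:E * \esum_(t in I) a t.
Proof.
move=> c0 a0; rewrite /esum -ereal_supZl //; last first.
  by apply/set0P; exists 0; exists set0; [exact: fsets_set0|rewrite fsbig_set0].
congr ereal_sup; apply/seteqP; split => x /=.
  move=> [X [finX XI] <-]; exists (\sum_(i \in X) a i); first by exists X.
  by rewrite !fsbig_finite // ge0_sume_distrr.
move=> [y [X [finX XI] <-] <-]; exists X => //.
by rewrite !fsbig_finite // ge0_sume_distrr.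
Qed.

Lemma ge0_esumZr T (I : set T) (c : \bar R) (a : T -> \bar R) :
  0 <= c -> (forall t, 0 <= a t) ->
  \esum_(t in I) (a t * c) = (\esum_(t in I) a t) * c.
Proof.
case: c => [c||] //= c0 a0.
  by rewrite muleC -ge0_esumZl //; apply: eq_esum => t _; rewrite muleC.
have [/eqP a_null|a_pos] := boolP (\esum_(t in I) a t == 0).
  have at0 t : I t -> a t = 0.
    by move=> It; apply/eqP; rewrite eq_le a0 -a_null le_term_esum.
  by rewrite a_null mul0e; apply: esum1 => t It; rewrite at0 // mul0e.
have [t It at_gt0] : exists2 t, I t & 0 < a t.
  apply: contrapT => /forallPNP a_le0; move/eqP: a_pos; apply.
  apply: esum1 => t It; apply/eqP; rewrite eq_le a0 andbT leNgt.
  exact/negP/a_le0.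
rewrite gt0_muley ?(lt_le_trans at_gt0 (le_term_esum _ It)) //.
apply/eqP; rewrite eq_le leey /=.
by apply: le_trans (le_term_esum (fun t => a t * +oo) It); rewrite gt0_muley.
Qed.

Lemma esum_esumD T T' (A : set T) (B : set T') (a b : T -> T' -> \bar R) :
  (forall x y, 0 <= a x y) -> (forall x y, 0 <= b x y) ->
  \esum_(x in A) \esum_(y in B) (a x y + b x y) =
  \esum_(x in A) \esum_(y in B) a x y + \esum_(x in A) \esum_(y in B) b x y.
Proof.
move=> a0 b0; rewrite -esumD => [|x _|x _]; last 2 first.
- by apply: esum_ge0 => y _.
- by apply: esum_ge0 => y _.
by apply: eq_esum => x _; rewrite esumD.
Qed.

End ExtendedSums.

Lemma connect_backward (T : finType) (e : rel T) (P : pred T) :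
  (forall a b, e a b -> P b -> P a) -> forall a b, connect e a b -> P b -> P a.
Proof.
move=> Pe a b /connectP [pth + ->]; elim: pth a => [|c pth IH] a //=.
by move=> /andP [eac /IH Pc] Pl; exact: Pe eac (Pc Pl).
Qed.

Section TabooSystem.
Variables (R : realType) (s : nat) (P : 'I_s -> 'I_s -> R).
Hypothesis P_ge0 : forall a b, (0 <= P a b)%R.
Hypothesis P_irr : forall a b : 'I_s, connect (fun a b => (0 < P a b)%R) a b.

Lemma irreducible_backward_to j (Q : pred 'I_s) :
  (forall a b, b != j -> (0 < P a b)%R -> Q b -> Q a) -> forall r, Q r -> Q j.
Proof.
move=> Qe r Qr.
have closed a b : (0 < P a b)%R -> Q b || Q j -> Q a || Q j.
  move=> Pab /orP[Qb|->]; last by rewrite orbT.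
  by case: (eqVneq b j) => [<-|bj]; rewrite ?Qb ?orbT // (Qe a b).
by have := connect_backward closed (P_irr j r); rewrite Qr orbb => /(_ isT).
Qed.

Lemma stationary_gt0 (nu : 'I_s -> R) :
  (forall i, 0 <= nu i)%R -> (\sum_(i < s) nu i = 1)%R ->
  (forall r, \sum_(i < s) nu i * P i r = nu r)%R -> forall j, (0 < nu j)%R.
Proof.
move=> nu_ge0 nu_sum1 nu_stat j; rewrite lt0r nu_ge0 andbT; apply/negP => /eqP nuj.
have closed a b : (0 < P a b)%R -> nu b == 0%R -> nu a == 0%R.
  move=> Pab /eqP nub; move: Pab; apply: contraTT => nua.
  have : (nu a * P a b <= 0)%R.
    rewrite -nub -(nu_stat b) (bigD1 a) //= lerDl.
    by apply: sumr_ge0 => i _; rewrite mulr_ge0.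
  have nua_gt0 : (0 < nu a)%R by rewrite lt0r nua nu_ge0.
  by rewrite pmulr_rle0 // leNgt.
move: nu_sum1; rewrite big1 => [/eqP|i _]; first by rewrite eq_sym oner_eq0.
by apply/eqP; apply: (connect_backward closed (P_irr i j)); rewrite nuj.
Qed.

Definition taboo_solution (j : 'I_s) (c x : 'I_s -> \bar R) :=
  forall i, x i = c i + \sum_(r < s | r != j) (P i r)%:E * x r.

Section Solutions.
Variables (j : 'I_s) (c x : 'I_s -> \bar R).
Hypotheses (c_ge0 : forall i, 0 <= c i) (x_ge0 : forall i, 0 <= x i).
Hypothesis x_sol : taboo_solution j c x.

Lemma taboo_sum_ge0 i : 0 <= \sum_(r < s | r != j) (P i r)%:E * x r.
Proof. by apply: sume_ge0 => r _; rewrite mule_ge0 ?lee_fin. Qed.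

Lemma taboo_source_le i : c i <= x i.
Proof. by rewrite [leRHS]x_sol leeDl // taboo_sum_ge0. Qed.

Lemma taboo_step_le a b : b != j -> (P a b)%:E * x b <= x a.
Proof.
move=> bj; rewrite [leRHS]x_sol; apply: lee_paddl => //.
rewrite (bigD1 b) //= leeDl //; apply: sume_ge0 => r _.
by rewrite mule_ge0 ?lee_fin.
Qed.

Lemma taboo_pinfty r : x r = +oo -> x j = +oo.
Proof.
move=> /eqP xr; apply/eqP.
apply: (irreducible_backward_to (Q := fun r => x r == +oo) _ xr).
move=> a b bj Pab /eqP xb; rewrite -leye_eq.
by rewrite -[leLHS](gt0_muley (x := (P a b)%:E)) ?lte_fin // -xb taboo_step_le.
Qed.

Lemma taboo_fin_num : x j < +oo -> forall r, x r \is a fin_num.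
Proof.
move=> xj r; rewrite ge0_fin_numE // ltey; apply/eqP => /taboo_pinfty xr.
by move: xj; rewrite xr ltxx.
Qed.

Variable nu : 'I_s -> R.
Hypothesis nu_pos : forall i, (0 < nu i)%R.
Hypothesis nu_stationary : forall r, (\sum_(i < s) nu i * P i r)%R = nu r.

Lemma stationary_taboo_mul : (forall r, r != j -> x r \is a fin_num) ->
  (nu j)%:E * x j = \sum_(i < s) (nu i)%:E * c i.
Proof.
move=> x_fin.
pose rest := \sum_(r < s | r != j) (nu r)%:E * x r.
have rest_fin : rest \is a fin_num.
  by apply/sum_fin_numP => r _ rj; rewrite fin_numM // x_fin.
have split_j : \sum_(i < s) (nu i)%:E * x i = (nu j)%:E * x j + rest.
  by rewrite (bigD1 j).
have expand : \sum_(i < s) (nu i)%:E * x i = \sum_(i < s) (nu i)%:E * c i + rest.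
  transitivity (\sum_(i < s)
      ((nu i)%:E * c i + (nu i)%:E * \sum_(r < s | r != j) (P i r)%:E * x r)).
    by apply: eq_bigr => i _; rewrite {1}x_sol ge0_muleDr ?taboo_sum_ge0.
  rewrite big_split /=; congr (_ + _).
  transitivity (\sum_(i < s) \sum_(r < s | r != j) (nu i)%:E * ((P i r)%:E * x r)).
    apply: eq_bigr => i _; rewrite ge0_sume_distrr // => r _.
    by rewrite mule_ge0 ?lee_fin.
  rewrite exchange_big /=; apply: eq_bigr => r _.
  rewrite -(nu_stationary r) -sumEFin ge0_sume_distrl /=; last first.
    by move=> i _; rewrite lee_fin mulr_ge0 // ltW.
  by apply: eq_bigr => i _; rewrite muleA -EFinM.
by have := congr1 (fun z => z - rest) (etrans (esym split_j) expand); rewrite /= !addeK.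
Qed.

Lemma stationary_taboo :
  ((forall i, c i \is a fin_num) -> forall r, x r \is a fin_num) ->
  x j = (\sum_(i < s) (nu i)%:E * c i) * ((nu j)^-1)%:E.
Proof.
move=> x_fin; have nuj := nu_pos j.
have [c_fin|/existsNP[i /negP]] := pselect (forall i, c i \is a fin_num).
  rewrite -stationary_taboo_mul => [|r _]; last exact: x_fin.
  by rewrite muleAC -EFinM mulfV ?gt_eqF // mul1e.
rewrite ge0_fin_numE // -leNgt leye_eq => /eqP ci.
have xj : x j = +oo.
  by apply: (@taboo_pinfty i); apply/eqP; rewrite -leye_eq -ci taboo_source_le.
have -> : \sum_(i < s) (nu i)%:E * c i = +oo.
  apply/eqP; rewrite -leye_eq (bigD1 i) //= ci gt0_muley ?lte_fin //.
  rewrite addye // gt_eqF // (lt_le_trans ltNy0) // sume_ge0 // => r _.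
  by rewrite mule_ge0 // lee_fin ltW.
by rewrite xj gt0_mulye // lte_fin invr_gt0.
Qed.

End Solutions.

Lemma taboo_solution_sum j n (c x : 'I_n -> 'I_s -> \bar R) :
  (forall w i, 0 <= x w i) -> (forall w, taboo_solution j (c w) (x w)) ->
  taboo_solution j (fun i => \sum_(w < n) c w i) (fun i => \sum_(w < n) x w i).
Proof.
move=> x_ge0 x_sol i; under eq_bigr do rewrite x_sol.
rewrite big_split /= exchange_big /=; congr (_ + _); apply: eq_bigr => r _.
by rewrite ge0_sume_distrr // => w _.
Qed.

(* The defect 1 - h is a nonnegative function, harmonic off j and vanishing at
   j; by irreducibility its positivity would propagate back to j. *)
Lemma taboo_hit_prob1 j (h : 'I_s -> \bar R) :
  (forall i, \sum_(r < s) P i r = 1)%R -> (forall i, 0 <= h i <= 1) ->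
  taboo_solution j (fun i => (P i j)%:E) h -> h j = 1 -> forall i, h i = 1.
Proof.
move=> P_sum1 h01 h_sol hj.
pose hR r := fine (h r).
have hE r : h r = (hR r)%:E.
  have /andP[h0 h1] := h01 r.
  by rewrite fineK // ge0_fin_numE // (le_lt_trans h1) ?ltey.
have hR_le1 r : (hR r <= 1)%R by rewrite -lee_fin -hE; case/andP: (h01 r).
have hR_sol i : hR i = (P i j + \sum_(r < s | r != j) P i r * hR r)%R.
  apply: EFin_inj; rewrite -hE h_sol EFinD -sumEFin; congr (_ + _).
  by apply: eq_bigr => r _; rewrite hE EFinM.
have P_sum1j i : (P i j + \sum_(r < s | r != j) P i r = 1)%R.
  by rewrite -(P_sum1 i) [in RHS](bigD1 j).
have closed a b : b != j -> (0 < P a b)%R -> hR b != 1%R -> hR a != 1%R.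
  move=> bj Pab hb; apply/negP => /eqP ha.
  have defect : (\sum_(r < s | r != j) P a r * (1 - hR r) = 1 - hR a)%R.
    under eq_bigr do rewrite mulrBr mulr1.
    rewrite sumrB (hR_sol a) -{1}(P_sum1j a); lra.
  have defect_b : (0 < P a b * (1 - hR b))%R.
    by rewrite mulr_gt0 // subr_gt0 lt_neqAle hb hR_le1.
  have : (P a b * (1 - hR b) <= \sum_(r < s | r != j) P a r * (1 - hR r))%R.
    rewrite (bigD1 b) //= lerDl; apply: sumr_ge0 => r _.
    by rewrite mulr_ge0 // subr_ge0.
  by move: defect_b; rewrite defect ha; lra.
move=> i; rewrite hE; congr EFin; apply/eqP; apply: contraT => hi.
have := irreducible_backward_to closed hi.
by rewrite /hR hj eqxx.
Qed.

Lemma taboo_supersolution j (c c' y : 'I_s -> \bar R) (C : R) :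
  (0 <= C)%R -> (forall i, 0 <= c' i) -> (forall i, 0 <= y i) ->
  taboo_solution j c' y -> (forall i, c i <= C%:E * c' i) ->
  forall i, c i + \sum_(r < s | r != j) (P i r)%:E * (C%:E * y r) <= C%:E * y i.
Proof.
move=> C0 c'_ge0 y_ge0 y_sol cC i.
rewrite [in leRHS]y_sol ge0_muleDr ?taboo_sum_ge0 //; apply: leeD => //.
rewrite ge0_sume_distrr => [|r _]; last by rewrite mule_ge0 ?lee_fin.
by apply: lee_sum => r _; rewrite muleCA.
Qed.
End TabooSystem.

Section FirstStep.
Variables (R : realType) (s d : nat) (q : 'I_s -> 'I_s -> {ffun 'I_d -> nat} -> R).
Hypothesis q_ge0 : forall i j k, (0 <= q i j k)%R.
Local Notation T := (traj s d).
Local Notation K := {ffun 'I_d -> nat}.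

Lemma traj_prob_ge0 i (t : T) : (0 <= traj_prob q i t)%R.
Proof. by elim: t i => [|[r k] t IH] i /=; rewrite ?mulr_ge0. Qed.

Lemma esum_first_step (B : set T) (f : T -> \bar R) :
  ~ B [::] -> (forall t, 0 <= f t) ->
  \esum_(t in B) f t = \sum_(r < s) \esum_(k in [set: K])
     \esum_(t in [set t | B ((r, k) :: t)]) f ((r, k) :: t).
Proof.
move=> Bnil f0.
rewrite (reindex_esum ([set: 'I_s * K] `*`` (fun x => [set t | B (x :: t)])) B
  (fun y => y.1 :: y.2)); last first.
  split.
  - by move=> [x t] [].
  - by move=> [x1 t1] [x2 t2] _ _ /= [-> ->].
  - by move=> [|x t] Bt //; exists (x, t).
rewrite -(esum_esum (a := fun x t => f (x :: t))) //.
have -> : [set: 'I_s * K] = [set: 'I_s] `*`` (fun _ => [set: K]) by apply/seteqP.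
transitivity (\esum_(x in [set: 'I_s] `*`` (fun _ => [set: K]))
   \esum_(t in [set t | B ((x.1, x.2) :: t)]) f ((x.1, x.2) :: t)).
  by apply: eq_esum => -[r k].
rewrite -(esum_esum (a := fun r k => \esum_(t in [set t | B ((r, k) :: t)])
  f ((r, k) :: t))) => [|r k _ _]; last exact: esum_ge0.
by rewrite esum_finType // => r; apply: esum_ge0 => k _; exact: esum_ge0.
Qed.

Definition first_step_tail (j : 'I_s) (B B' : set T) :=
  forall r k, [set t | B ((r, k) :: t)] = if r == j then [set [::]] else B'.

Definition FP_upto (j : 'I_s) (N : nat) : set T :=
  [set t | first_passage j t /\ (size t <= N)%N].

Lemma FP_nil j : ~ FP j ([::] : T). Proof. by []. Qed.

Lemma FP_upto_nil j N : ~ FP_upto j N ([::] : T). Proof. by case. Qed.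

Lemma FP_first_step_tail j : first_step_tail j (FP j) (FP j).
Proof.
move=> r k; apply/seteqP; split => t; rewrite /FP /=.
  by case: t => [|x t] /=; [move=> ->|case/andP => /negPf ->].
by case: ifP => [rj ->|rj]; case: t => [|x t] //= ->; rewrite rj.
Qed.

Lemma FP_upto_first_step_tail j N : first_step_tail j (FP_upto j N.+1) (FP_upto j N).
Proof.
move=> r k; apply/seteqP; split => t; rewrite /FP_upto /=.
  by case: t => [|x t] /=; [case=> ->|case=> /andP[/negPf ->]].
by case: ifP => [rj ->|rj]; case: t => [|x t] //= [-> ?]; rewrite rj.
Qed.

Definition expect (B : set T) (w : T -> R) i := \esum_(t in B) (traj_prob q i t * w t)%:E.

Definition qmean (g : K -> R) i r := \esum_(k in [set: K]) (q i r k * g k)%:E.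

Lemma expect_ge0 B w i : (forall t, 0 <= w t)%R -> 0 <= expect B w i.
Proof. by move=> w0; apply: esum_ge0 => t _; rewrite lee_fin mulr_ge0 ?traj_prob_ge0. Qed.

Lemma qmean_ge0 g i r : (forall k, 0 <= g k)%R -> 0 <= qmean g i r.
Proof. by move=> g0; apply: esum_ge0 => k _; rewrite lee_fin mulr_ge0. Qed.

Lemma expect_first_step j (B B' : set T) w i :
  ~ B [::] -> first_step_tail j B B' -> (forall t, 0 <= w t)%R ->
  expect B w i = \esum_(k in [set: K]) (q i j k * w [:: (j, k)])%:E +
    \sum_(r < s | r != j) \esum_(k in [set: K]) \esum_(t in B')
      (q i r k * (traj_prob q r t * w ((r, k) :: t)))%:E.
Proof.
move=> Bnil tail w0.
rewrite /expect esum_first_step // => [|t]; last first.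
  by rewrite lee_fin mulr_ge0 ?traj_prob_ge0.
rewrite (bigD1 j) //=; congr (_ + _).
  by apply: eq_esum => k _; rewrite tail eqxx esum_set1 /= ?mulr1 // lee_fin mulr_ge0.
apply: eq_bigr => r /negPf rj; apply: eq_esum => k _; rewrite tail rj.
by apply: eq_esum => t _ /=; rewrite mulrA.
Qed.

Lemma esum_qmean_expect (B : set T) g h i r :
  (forall k, 0 <= g k)%R -> (forall t, 0 <= h t)%R ->
  \esum_(k in [set: K]) \esum_(t in B) (q i r k * g k * (traj_prob q r t * h t))%:E
  = qmean g i r * expect B h r.
Proof.
move=> g0 h0; rewrite -ge0_esumZr; last 2 first.
- exact: expect_ge0.
- by move=> k; rewrite lee_fin mulr_ge0.
apply: eq_esum => k _; rewrite -ge0_esumZl ?mulr_ge0 // => t.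
by rewrite lee_fin mulr_ge0 ?traj_prob_ge0.
Qed.

(* With these weights, expect (FP j) (wS u) i is mu^(u)_ij and
   qmean (gX u) i r is p_ir m^[u]_ir. *)
Definition wS u : T -> R := fun t => (coordS u t)%:R.
Definition wSS u v : T -> R := fun t => (coordS u t * coordS v t)%:R.
Definition gX u : K -> R := fun k => (k u)%:R.
Definition gXX u v : K -> R := fun k => (k u * k v)%:R.

Lemma coordS_cons u r k (t : T) : coordS u ((r, k) :: t) = (k u + coordS u t)%N.
Proof. by rewrite /coordS big_cons. Qed.

Local Ltac weights_ge0 :=
  move=> *; rewrite ?lee_fin; unfold cst, wS, wSS, gX, gXX;
  repeat apply: addr_ge0; repeat apply: mulr_ge0; rewrite ?traj_prob_ge0 ?ler0n.

Section Moments.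
Variables (j : 'I_s) (B B' : set T).
Hypotheses (Bnil : ~ B [::]) (tail : first_step_tail j B B').

Lemma expect_first_step_one i :
  expect B (cst 1%R) i = qmean (cst 1%R) i j +
    \sum_(r < s | r != j) qmean (cst 1%R) i r * expect B' (cst 1%R) r.
Proof.
rewrite (expect_first_step _ Bnil tail); last by weights_ge0.
congr (_ + _); apply: eq_bigr => r _; rewrite -esum_qmean_expect; try by weights_ge0.
by apply: eq_esum => k _; apply: eq_esum => t _; rewrite /cst /= !mulr1.
Qed.

Lemma expect_first_step_S u i :
  expect B (wS u) i = qmean (gX u) i j + \sum_(r < s | r != j)
    (qmean (gX u) i r * expect B' (cst 1%R) r + qmean (cst 1%R) i r * expect B' (wS u) r).
Proof.
rewrite (expect_first_step _ Bnil tail); last by weights_ge0.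
congr (_ + _).
  by apply: eq_esum => k _; rewrite /wS /gX coordS_cons /coordS big_nil addn0.
apply: eq_bigr => r _; rewrite -!esum_qmean_expect -?esum_esumD; try by weights_ge0.
apply: eq_esum => k _; apply: eq_esum => t _; rewrite -EFinD.
by rewrite /cst /wS /gX coordS_cons natrD; congr EFin; ring.
Qed.

Lemma expect_first_step_SS u v i :
  expect B (wSS u v) i = qmean (gXX u v) i j + \sum_(r < s | r != j)
    (qmean (gXX u v) i r * expect B' (cst 1%R) r
     + qmean (gX u) i r * expect B' (wS v) r + qmean (gX v) i r * expect B' (wS u) r
     + qmean (cst 1%R) i r * expect B' (wSS u v) r).
Proof.
rewrite (expect_first_step _ Bnil tail); last by weights_ge0.
congr (_ + _).
  by apply: eq_esum => k _; rewrite /wSS /gXX !coordS_cons /coordS !big_nil !addn0.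
apply: eq_bigr => r _; rewrite -!esum_qmean_expect -?esum_esumD; try by weights_ge0.
apply: eq_esum => k _; apply: eq_esum => t _; rewrite -!EFinD.
by rewrite /cst /wS /wSS /gX /gXX !coordS_cons !natrM !natrD; congr EFin; ring.
Qed.

End Moments.

Lemma qmean_gX_ge0 u i r : 0 <= qmean (gX u) i r.
Proof. by apply: qmean_ge0 => k; exact: ler0n. Qed.

Lemma qmean_gXX_ge0 u v i r : 0 <= qmean (gXX u v) i r.
Proof. by apply: qmean_ge0 => k; exact: ler0n. Qed.

Lemma expect_wS_ge0 B u i : 0 <= expect B (wS u) i.
Proof. by apply: expect_ge0 => t; exact: ler0n. Qed.

Lemma expect_wSS_ge0 B u v i : 0 <= expect B (wSS u v) i.
Proof. by apply: expect_ge0 => t; exact: ler0n. Qed.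

End FirstStep.

Arguments FP_nil {s d} j.
Arguments FP_upto_nil {s d} j N.
Arguments wS {R s d}.
Arguments wSS {R s d}.
Arguments gX {R d}.
Arguments gXX {R d}.

Section Kernel.
Variables (R : realType) (s d : nat) (q : 'I_s -> 'I_s -> {ffun 'I_d -> nat} -> R).
Hypothesis q_ge0 : forall i j k, (0 <= q i j k)%R.
Hypothesis q_sum1 : forall i, \sum_(j < s) pE q i j = 1.

Lemma pE_EFin i r : pE q i r = (p q i r)%:E.
Proof.
have pE_ge0 r' : 0 <= pE q i r' by apply: esum_ge0 => k _; rewrite lee_fin.
have pE_le1 : pE q i r <= 1.
  by rewrite -(q_sum1 i) (bigD1 r) //= leeDl // sume_ge0.
by rewrite /p fineK // ge0_fin_numE // (le_lt_trans pE_le1) ?ltey.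
Qed.

Lemma p_ge0 i r : (0 <= p q i r)%R.
Proof. by rewrite -lee_fin -pE_EFin; apply: esum_ge0 => k _; rewrite lee_fin. Qed.

Lemma p_sum1 i : (\sum_(r < s) p q i r = 1)%R.
Proof.
apply: EFin_inj; rewrite -sumEFin -(q_sum1 i).
by apply: eq_bigr => r _; rewrite pE_EFin.
Qed.

Lemma qmean_one i r : qmean q (cst 1%R) i r = (p q i r)%:E.
Proof. by rewrite -pE_EFin; apply: eq_esum => k _; rewrite /cst /= mulr1. Qed.

Lemma p_mul_m1c u i r : (p q i r)%:E * m1c q u i r = qmean q (gX u) i r.
Proof.
rewrite /m1c; case: ifPn => [/eqP pir|pir]; last first.
  by rewrite muleCA -EFinM mulfV // mule1.
rewrite mule0; apply/esym/esum1 => k _.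
have -> : q i r k = 0%R.
  apply/eqP; rewrite eq_le q_ge0 andbT -lee_fin -pir -pE_EFin.
  exact: (le_term_esum (fun k => (q i r k)%:E)).
by rewrite mul0r.
Qed.

Lemma m1_ge0 u i : 0 <= m1 q u i.
Proof. by apply: sume_ge0 => r _; exact: qmean_gX_ge0. Qed.

Lemma m2_ge0 u v i : 0 <= m2 q u v i.
Proof. by apply: sume_ge0 => r _; exact: qmean_gXX_ge0. Qed.

Lemma expect_FP_upto0 j w i : expect q (FP_upto j 0) w i = 0.
Proof. by apply: esum1 => -[|x t] []. Qed.

Lemma expect_FP_upto_le j N w i : expect q (FP_upto j N) w i <= expect q (FP j) w i.
Proof. by apply: le_esum_subset => t []. Qed.

Lemma expect_FP_le j w i z :
  (forall N, expect q (FP_upto j N) w i <= z) -> expect q (FP j) w i <= z.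
Proof.
move=> upto_le; apply: (esum_le_exhaustion (A := FP_upto j)) => // X finX XFP.
have [F XF] := finite_fsetP.1 finX; rewrite XF in XFP *.
exists (\max_(t <- finmap.enum_fset F) size t)%N => t tF; split; first exact: XFP.
exact: leq_bigmax_seq.
Qed.

Lemma expect_FP_upto_one_le1 j N i : expect q (FP_upto j N) (cst 1%R) i <= 1.
Proof.
elim: N i => [|N IH] i; first by rewrite expect_FP_upto0.
rewrite (expect_first_step_one q_ge0 (FP_upto_nil j N.+1)
  (FP_upto_first_step_tail j N)) !qmean_one.
have -> : 1 = (p q i j)%:E + \sum_(r < s | r != j) (p q i r)%:E.
  by rewrite sumEFin -EFinD -(p_sum1 i) (bigD1 j).
rewrite leeD2l //; apply: lee_sum => r _; rewrite qmean_one.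
by rewrite -[leRHS]mule1 lee_wpmul2l // lee_fin p_ge0.
Qed.

Lemma hitting_prob1 j : irreducible q -> prob_hit q j j = 1 ->
  forall i, expect q (FP j) (cst 1%R) i = 1.
Proof.
have hitE i : prob_hit q i j = expect q (FP j) (cst 1%R) i.
  by apply: eq_esum => t _; rewrite /cst /= mulr1.
move=> irr; rewrite hitE; apply: (taboo_hit_prob1 p_ge0 irr p_sum1) => [i|i].
  apply/andP; split; first by apply: (expect_ge0 q_ge0) => t; rewrite /cst /= ler01.
  by apply: expect_FP_le => N; exact: expect_FP_upto_one_le1.
rewrite (expect_first_step_one q_ge0 (FP_nil j) (FP_first_step_tail j)).
by rewrite qmean_one; under eq_bigr do rewrite qmean_one.
Qed.

Lemma sum_coord_gt0 (k : {ffun 'I_d -> nat}) :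
  k != zero_time d -> (0 < \sum_(w < d) k w)%N.
Proof.
apply: contraNT; rewrite -eqn0Ngt sum_nat_eq0 => /forallP k0.
by apply/eqP/ffunP => w; rewrite ffunE; apply/eqP/(implyP (k0 w)).
Qed.

Lemma sum_m1_ge1 i : (forall r, q i r (zero_time d) = 0%R) -> 1 <= \sum_(w < d) m1 q w i.
Proof.
move=> q0; rewrite /m1 exchange_big /= -(q_sum1 i); apply: lee_sum => r _.
rewrite -esum_sum => [|k w _ _]; last by rewrite lee_fin mulr_ge0.
apply: le_esum => k _; rewrite sumEFin lee_fin -mulr_sumr.
have [->|k0] := eqVneq k (zero_time d); first by rewrite q0 mul0r.
by rewrite ler_peMr // -natr_sum ler1n sum_coord_gt0.
Qed.

Section FirstPassageMoments.
Variable j : 'I_s.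
Hypothesis hit_j : forall i, expect q (FP j) (cst 1%R) i = 1.

Lemma mean_taboo_solution u : taboo_solution (p q) j (m1 q u) (expect q (FP j) (wS u)).
Proof.
move=> i; rewrite (expect_first_step_S q_ge0 (FP_nil j) (FP_first_step_tail j)).
have -> : m1 q u i = qmean q (gX u) i j + \sum_(r < s | r != j) qmean q (gX u) i r.
  by rewrite /m1 (bigD1 j).
rewrite -addeA -big_split; congr (_ + _); apply: eq_bigr => r _.
by rewrite hit_j mule1 qmean_one.
Qed.

Definition second_source u v i := m2 q u v i + \sum_(r < s | r != j)
  (qmean q (gX u) i r * expect q (FP j) (wS v) r
   + qmean q (gX v) i r * expect q (FP j) (wS u) r).

Lemma second_source_split u v i (D : 'I_s -> \bar R) :
  qmean q (gXX u v) i j + \sum_(r < s | r != j)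
    (qmean q (gXX u v) i r + qmean q (gX u) i r * expect q (FP j) (wS v) r
     + qmean q (gX v) i r * expect q (FP j) (wS u) r + D r)
  = second_source u v i + \sum_(r < s | r != j) D r.
Proof.
rewrite /second_source.
have -> : m2 q u v i =
    qmean q (gXX u v) i j + \sum_(r < s | r != j) qmean q (gXX u v) i r.
  by rewrite /m2 (bigD1 j).
by rewrite !big_split /= !addeA.
Qed.

Lemma second_moment_taboo_solution u v :
  taboo_solution (p q) j (second_source u v) (expect q (FP j) (wSS u v)).
Proof.
move=> i; rewrite (expect_first_step_SS q_ge0 (FP_nil j) (FP_first_step_tail j)).
by under eq_bigr do rewrite hit_j mule1 !qmean_one; rewrite second_source_split.
Qed.

Lemma mean_fin_num u : irreducible q -> expect q (FP j) (wS u) j < +oo ->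
  forall i, expect q (FP j) (wS u) i \is a fin_num.
Proof.
move=> irr; apply: (taboo_fin_num p_ge0 irr (m1_ge0 u) _ (mean_taboo_solution u)).
exact: expect_wS_ge0.
Qed.

Lemma second_source_ge0 u v i : 0 <= second_source u v i.
Proof.
rewrite adde_ge0 ?m2_ge0 //.
by apply: sume_ge0 => r _; rewrite adde_ge0 // mule_ge0 ?qmean_gX_ge0 ?expect_wS_ge0.
Qed.

Lemma expect_FP_upto_second_le u v (z : 'I_s -> \bar R) : (forall i, 0 <= z i) ->
  (forall i, second_source u v i + \sum_(r < s | r != j) (p q i r)%:E * z r <= z i) ->
  forall N i, expect q (FP_upto j N) (wSS u v) i <= z i.
Proof.
move=> z_ge0 z_super; elim => [|N IH] i; first by rewrite expect_FP_upto0.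
rewrite (expect_first_step_SS q_ge0 (FP_upto_nil j N.+1) (FP_upto_first_step_tail j N)).
apply: le_trans (z_super i); rewrite -second_source_split.
apply: leeD2l; apply: lee_sum => r _; rewrite qmean_one.
repeat apply: leeD.
- by rewrite -[leRHS]mule1 lee_wpmul2l ?qmean_gXX_ge0 ?expect_FP_upto_one_le1.
- by rewrite lee_wpmul2l ?qmean_gX_ge0 ?expect_FP_upto_le.
- by rewrite lee_wpmul2l ?qmean_gX_ge0 ?expect_FP_upto_le.
- by rewrite lee_wpmul2l ?lee_fin ?p_ge0 ?IH.
Qed.

(* A finite second-moment source is dominated by a multiple of the source
   sum_w m1 w >= 1 of the first moments, whose solution is finite. *)
Lemma second_fin_num u v : irreducible q -> (forall i r, q i r (zero_time d) = 0%R) ->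
  (forall w, expect q (FP j) (wS w) j < +oo) ->
  (forall i, second_source u v i \is a fin_num) ->
  forall i, expect q (FP j) (wSS u v) i \is a fin_num.
Proof.
move=> irr q0 mean_lt src_fin.
pose y i := \sum_(w < d) expect q (FP j) (wS w) i.
have y_ge0 i : 0 <= y i by apply: sume_ge0 => w _; exact: expect_wS_ge0.
have y_sol : taboo_solution (p q) j (fun i => \sum_(w < d) m1 q w i) y.
  apply: taboo_solution_sum => [w i|w]; first exact: expect_wS_ge0.
  exact: mean_taboo_solution.
pose C := (\sum_(i < s) fine (second_source u v i))%R.
have C_ge0 : (0 <= C)%R by apply: sumr_ge0 => i _; rewrite fine_ge0 ?second_source_ge0.
have src_le i : second_source u v i <= C%:E * \sum_(w < d) m1 q w i.
  apply: (@le_trans _ _ C%:E); last first.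
    by rewrite -[leLHS]mule1 lee_wpmul2l ?lee_fin ?(sum_m1_ge1 (q0 i)).
  rewrite -(fineK (src_fin i)) lee_fin /C (bigD1 i) //= lerDl.
  by apply: sumr_ge0 => r _; rewrite fine_ge0 ?second_source_ge0.
have m1_sum_ge0 i : 0 <= \sum_(w < d) m1 q w i by apply: sume_ge0 => w _; exact: m1_ge0.
have z_super := taboo_supersolution p_ge0 C_ge0 m1_sum_ge0 y_ge0 y_sol src_le.
move=> i; rewrite ge0_fin_numE ?expect_wSS_ge0 //.
apply: (@le_lt_trans _ _ (C%:E * y i)); last first.
  rewrite ltey_eq fin_numM //; apply/sum_fin_numP => w _ _.
  exact: (mean_fin_num irr (mean_lt w)).
apply: expect_FP_le => N; apply: expect_FP_upto_second_le z_super N i => r.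
by rewrite mule_ge0 ?lee_fin.
Qed.

Lemma mu1E u i : mu1 q u i j = expect q (FP j) (wS u) i.
Proof. by apply: eq_esum => t _; rewrite EFinM. Qed.

Lemma mu2E u v i : mu2 q u v i j = expect q (FP j) (wSS u v) i.
Proof. by apply: eq_esum => t _; rewrite EFinM. Qed.

Lemma second_moment_rhsE (nu : 'I_s -> R) u v : (forall i, 0 <= nu i)%R ->
  (\sum_(i < s) (nu i)%:E * m2 q u v i) * ((nu j)^-1)%:E
  + (\sum_(i < s) \sum_(r < s | r != j) (nu i)%:E * (p q i r)%:E *
       (m1c q u i r * mu1 q v r j + m1c q v i r * mu1 q u r j)) * ((nu j)^-1)%:E
  = (\sum_(i < s) (nu i)%:E * second_source u v i) * ((nu j)^-1)%:E.
Proof.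
move=> nu_ge0.
have m1c_ge0 w i r : 0 <= m1c q w i r.
  rewrite /m1c; case: ifP => // _.
  by rewrite mule_ge0 ?qmean_gX_ge0 // lee_fin invr_ge0 p_ge0.
have cross_ge0 i r : 0 <= m1c q u i r * mu1 q v r j + m1c q v i r * mu1 q u r j.
  by rewrite adde_ge0 // mule_ge0 // mu1E expect_wS_ge0.
rewrite -ge0_muleDl; last 2 first.
- by apply: sume_ge0 => i _; rewrite mule_ge0 ?lee_fin ?m2_ge0.
- apply: sume_ge0 => i _; apply: sume_ge0 => r _.
  by rewrite !mule_ge0 ?lee_fin ?p_ge0.
congr (_ * _); rewrite -big_split; apply: eq_bigr => i _ /=.
rewrite /second_source ge0_muleDr; last 2 first.
- exact: m2_ge0.
- by apply: sume_ge0 => r _; rewrite adde_ge0 // mule_ge0 ?qmean_gX_ge0 ?expect_wS_ge0.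
congr (_ + _); rewrite ge0_sume_distrr; last first.
  by move=> r _; rewrite adde_ge0 // mule_ge0 ?qmean_gX_ge0 ?expect_wS_ge0.
apply: eq_bigr => r _; rewrite -muleA; congr (_ * _).
rewrite ge0_muleDr ?mule_ge0 ?mu1E ?expect_wS_ge0 //.
by rewrite !muleA !p_mul_m1c.
Qed.

End FirstPassageMoments.

End Kernel.

Theorem proposition12 (R : realType) (s d : nat)
  (q : 'I_s -> 'I_s -> {ffun 'I_d -> nat} -> R) (nu : 'I_s -> R) :
  is_mt_kernel q -> irreducible q -> ergodic q -> stationary q nu ->
  forall (j : 'I_s) (u v : 'I_d),
    [/\ mu1 q u j j = (\sum_(i < s) (nu i)%:E * m1 q u i) * ((nu j)^-1)%:E,
        mu q j j = (fun w => (\sum_(i < s) (nu i)%:E * mvec q i w) * ((nu j)^-1)%:E) &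
        mu2 q u v j j =
          (\sum_(i < s) (nu i)%:E * m2 q u v i) * ((nu j)^-1)%:E
          + (\sum_(i < s) \sum_(r < s | r != j)
               (nu i)%:E * (p q i r)%:E *
               (m1c q u i r * mu1 q v r j + m1c q v i r * mu1 q u r j))
            * ((nu j)^-1)%:E].
Proof.
move=> [q_ge0 [q0 q_sum1]] irr erg [nu_ge0 [nu_sum1 nu_stat]] j u v.
have P_ge0 := p_ge0 q_ge0 q_sum1.
have nu_pos := stationary_gt0 P_ge0 irr nu_ge0 nu_sum1 nu_stat.
have hit_j := hitting_prob1 q_ge0 q_sum1 irr (proj1 (proj1 (erg u j))).
have mean_lt w : expect q (FP j) (wS w) j < +oo.
  by rewrite -mu1E; case: (erg w j) => -[].
have mean w : mu1 q w j j = (\sum_(i < s) (nu i)%:E * m1 q w i) * ((nu j)^-1)%:E.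
  rewrite mu1E; apply: (stationary_taboo P_ge0 irr _ _
    (mean_taboo_solution q_ge0 q_sum1 hit_j w) nu_pos nu_stat) => [i|i|_].
  - exact: m1_ge0.
  - exact: expect_wS_ge0.
  - exact: mean_fin_num.
split => //; first exact/funext/mean.
rewrite second_moment_rhsE // mu2E.
apply: (stationary_taboo P_ge0 irr _ _
  (second_moment_taboo_solution q_ge0 q_sum1 hit_j u v) nu_pos nu_stat) => [i|i|src_fin].
- exact: second_source_ge0.
- exact: expect_wSS_ge0.
- exact: second_fin_num.
Qed.
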